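(* Let $Q$ be a conjunctive query without self-joins that is connected, non-boolean, and contains no universal attribute and no vacuum relation. Then $Q$ contains a hard structure.
   Context: CQ $Q(\mathbf{A}) :- R_1(\mathbb{A}_1),\dots,R_p(\mathbb{A}_p)$ with distinct relation symbols, $\mathrm{attr}(R_i)=\mathbb{A}_i$, $\mathrm{attr}(Q)=\bigcup_i\mathbb{A}_i$, $\mathrm{head}(Q)=\mathbf{A}$. $Q$ is boolean if $\mathbf{A}=\emptyset$; connected if the graph on relations, with edges between relations sharing an attribute, is connected; a relation is vacuum if its attribute set is empty; an attribute is universal if it lies in $\mathbf{A}$ and in every $\mathbb{A}_i$. Standing assumption: distinct relations have distinct attribute sets. $R_j$ is exogenous if another relation $R_i$ has $\mathrm{attr}(R_i)\subsetneq\mathrm{attr}(R_j)$, endogenous otherwise. A path between relations using only attributes in $S$ is a sequence of relations with consecutive ones sharing an attribute of $S$. Triad-like structure: three endogenous relations such that each pair is joined by a path using only attributes in $\mathrm{attr}(Q)\setminus(\mathrm{head}(Q)\cup\mathrm{attr}(R))$, $R$ the third. $R_j$ is dominated by $R_i$ if (1) $\mathrm{attr}(R_i)\subseteq\mathrm{attr}(R_j)$; (2) for every $R_k$ with $\mathrm{attr}(R_i)\setminus\mathrm{attr}(R_k)\ne\emptyset$, $\mathrm{attr}(R_j)\cap\mathrm{attr}(R_k)\subseteq\mathrm{attr}(R_i)\cap\mathrm{head}(Q)$; (3) $\mathrm{attr}(R_i)\subseteq\mathrm{head}(Q)$ or $\mathrm{head}(Q)\subseteq\mathrm{attr}(R_i)$;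 non-dominated relations are dominated by no other relation. Strand: two non-dominated relations $R_i,R_j$ with $\mathrm{head}(Q)\cap\mathrm{attr}(R_i)\ne\mathrm{head}(Q)\cap\mathrm{attr}(R_j)$ and $(\mathrm{attr}(R_i)\cap\mathrm{attr}(R_j))\setminus\mathrm{head}(Q)\ne\emptyset$. The head join of non-dominated relations is the full query of non-dominated relations restricted to $\mathrm{head}(Q)$; a full query is hierarchical if for all attributes $A,B$ the sets of relations containing them are nested or disjoint. $Q$ contains a hard structure if it has a triad-like structure or a strand, or the head join of its non-dominated relations is non-hierarchical. *)

From mathcomp Require Import all_boot.
Set Implicit Arguments. Unset Strict Implicit. Unset Printing Implicit Defensive.

(* A conjunctive query without self-joins:
   - [Att] : finite type of attribute names,
   - [Rel] : finite type indexing the relation atoms R_1..R_p (distinct symbols),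
   - [attr i] : the attribute set attr(R_i),
   - [head]  : the head attributes head(Q). *)
Section CQ.
Variables (Att Rel : finType) (attr : Rel -> {set Att}) (head : {set Att}).

Definition attrQ : {set Att} := \bigcup_(i : Rel) attr i.

Definition head_in_body : Prop := head \subset attrQ.

Definition distinct_attr_sets : Prop := injective attr.

Definition is_boolean : Prop := head = set0.

Definition share_in (S : {set Att}) : rel Rel :=
  fun i j => [exists a in S, (a \in attr i) && (a \in attr j)].
Definition path_using (S : {set Att}) (i j : Rel) : Prop :=
  connect (share_in S) i j.

Definition connected_query : Prop :=
  forall i j : Rel, path_using attrQ i j.

Definition vacuum (i : Rel) : Prop := attr i = set0.

Definition universal (a : Att) : Prop :=
  a \in head /\ forall i : Rel, a \in attr i.

Definition exogenous (j : Rel) : Prop := exists i : Rel, attr i \proper attr j.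
Definition endogenous (j : Rel) : Prop := ~ exogenous j.

Definition triad_like : Prop :=
  exists r1 r2 r3 : Rel,
    [/\ r1 != r2, r1 != r3 & r2 != r3] /\
    [/\ endogenous r1, endogenous r2 & endogenous r3] /\
    [/\ path_using (attrQ :\: (head :|: attr r3)) r1 r2,
        path_using (attrQ :\: (head :|: attr r2)) r1 r3 &
        path_using (attrQ :\: (head :|: attr r1)) r2 r3].

Definition dominated_by (j i : Rel) : Prop :=
  [/\ attr i \subset attr j,
      (forall k : Rel, attr i :\: attr k != set0 ->
          attr j :&: attr k \subset attr i :&: head) &
      (attr i \subset head \/ head \subset attr i)].

Definition non_dominated (j : Rel) : Prop :=
  forall i : Rel, i != j -> ~ dominated_by j i.

Definition strand : Prop :=
  exists i j : Rel,
    [/\ non_dominated i, non_dominated j,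
        head :&: attr i != head :&: attr j &
        (attr i :&: attr j) :\: head != set0].

(* head join of the non-dominated relations: for each non-dominated R_i,
   an atom with attribute set attr(R_i) ∩ head(Q). *)
Definition headjoin_rels_with (a : Att) : Rel -> Prop :=
  fun i => non_dominated i /\ a \in attr i :&: head.

Definition headjoin_hierarchical : Prop :=
  forall a b : Att,
    (forall i, headjoin_rels_with a i -> headjoin_rels_with b i) \/
    (forall i, headjoin_rels_with b i -> headjoin_rels_with a i) \/
    (forall i, ~ (headjoin_rels_with a i /\ headjoin_rels_with b i)).

Definition has_hard_structure : Prop :=
  triad_like \/ strand \/ ~ headjoin_hierarchical.

End CQ.

From mathcomp Require Import all_boot.
From Stdlib Require Import Classical.
Set Implicit Arguments. Unset Strict Implicit. Unset Printing Implicit Defensive.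

(* Without a strand and with a hierarchical head join we find a universal attribute.
   Domination strictly shrinks attribute sets, so every relation sits above a non-dominated
   one, and whatever overlaps a dominated relation also overlaps its dominator. Let [a] be a
   head attribute contained in the most non-dominated relations. A non-dominated relation
   containing [a] and one missing [a] cannot share an attribute [x]: [x] would be in the head
   (no strand), and nestedness of the head join between [a] and [x] would contradict the
   maximality of [a]. Hence the relations overlapping a non-dominated relation containing [a]
   form an overlap-closed set, which by connectivity is everything; so [a] lies in every
   non-dominated relation, and thus in every relation. *)

Section Domination.
Variables (Att Rel : finType) (attr : Rel -> {set Att}) (head : {set Att}).

Definition dominated_byb (j i : Rel) : bool :=
  [&& attr i \subset attr j,
      [forall k, (attr i :\: attr k != set0) ==>
                 (attr j :&: attr k \subset attr i :&: head)] &
      (attr i \subset head) || (head \subset attr i)].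

Lemma dominated_byP j i : reflect (dominated_by attr head j i) (dominated_byb j i).
Proof.
apply: (iffP and3P) => [[sub /forallP dom /orP hd]|[sub dom hd]].
  by split=> // k; apply/implyP/dom.
by split=> //; [apply/forallP => k; apply/implyP/dom | apply/orP].
Qed.

Definition non_dominatedb (j : Rel) : bool :=
  [forall i, (i != j) ==> ~~ dominated_byb j i].

Lemma non_dominatedP j : reflect (non_dominated attr head j) (non_dominatedb j).
Proof.
apply: (iffP forallP) => [nd i ij /dominated_byP|nd i].
  by apply/negP; move: (nd i); rewrite ij.
by apply/implyP => ij; apply/dominated_byP/nd.
Qed.

Definition overlap (i j : Rel) : bool := attr i :&: attr j != set0.

Lemma overlapC i j : overlap i j = overlap j i.
Proof. by rewrite /overlap setIC. Qed.

Lemma share_in_attrQ : share_in attr (attrQ attr) =2 overlap.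
Proof.
move=> i j; apply/existsP/set0Pn => [[x /and3P [_ xi xj]]|[x]].
  by exists x; rewrite inE xi xj.
rewrite inE => /andP [xi xj]; exists x; rewrite /attrQ.
by rewrite xi xj !andbT; apply/bigcupP; exists i.
Qed.

Definition headjoin_rels (b : Att) : {set Rel} :=
  [set i | non_dominatedb i & b \in attr i :&: head].

Lemma headjoin_relsP b i :
  reflect (headjoin_rels_with attr head b i) (i \in headjoin_rels b).
Proof. by rewrite inE; apply: (iffP andP) => -[/non_dominatedP]. Qed.

Hypothesis attr_inj : injective attr.

Lemma dominated_card_lt j i :
  i != j -> dominated_by attr head j i -> #|attr i| < #|attr j|.
Proof.
move=> ij [sub _ _]; apply: proper_card; rewrite properEneq sub andbT.
by apply: contra ij => /eqP /attr_inj ->.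
Qed.

Lemma non_dominated_ind (P : Rel -> Prop) :
  (forall j, non_dominated attr head j -> P j) ->
  (forall j i, i != j -> dominated_by attr head j i -> P i -> P j) ->
  forall j, P j.
Proof.
move=> Pnd Pdom j; elim: {j}#|attr j|.+1 {-2}j (ltnSn #|attr j|) => // n IHn j.
rewrite ltnS => jn; have [/non_dominatedP/Pnd //|] := boolP (non_dominatedb j).
case/forallPn => i; rewrite negb_imply negbK => /andP [ij /dominated_byP dom].
by apply: Pdom ij dom (IHn _ (leq_trans (dominated_card_lt ij dom) jn)).
Qed.

Lemma exists_non_dominated_sub j :
  exists2 i, non_dominated attr head i & attr i \subset attr j.
Proof.
move: j; apply: non_dominated_ind => [j nd | j i _ [sub _ _] [k nd ki]]; first by exists j.
by exists k => //; apply: subset_trans sub.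
Qed.

Hypothesis attr_neq0 : forall i, attr i != set0.

Lemma exists_non_dominated_head j : attr j :&: head != set0 ->
  exists2 i, non_dominated attr head i & attr i :&: head != set0.
Proof.
move: j; apply: non_dominated_ind => [j nd | j i _ [_ _ [hd|hd]] IH jh]; first by exists j.
  by apply: IH; rewrite (setIidPl hd) attr_neq0.
apply: IH; rewrite (setIidPr hd); apply: contraNneq jh => ->.
by rewrite setI0.
Qed.

Lemma overlap_refl i : overlap i i.
Proof. by rewrite /overlap setIid. Qed.

(* Unless R_i is inside R_k, condition (2) of domination puts the shared attribute into R_i. *)
Lemma overlap_dominated j i k :
  dominated_by attr head j i -> overlap k j -> overlap k i.
Proof.
move=> [sub dom _] /set0Pn [x]; rewrite inE => /andP [xk xj].
have [ik | nik] := boolP (attr i \subset attr k).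
  by rewrite /overlap setIC (setIidPl ik).
have /dom /subsetP /(_ x) : attr i :\: attr k != set0 by rewrite setD_eq0.
rewrite !inE xj xk => /(_ isT) /andP [xi _].
by apply/set0Pn; exists x; rewrite inE xk xi.
Qed.

Lemma exists_non_dominated_absorbing j : exists2 i, non_dominated attr head i &
  forall k, overlap k j -> overlap k i.
Proof.
move: j; apply: non_dominated_ind => [j nd | j i _ dom [k nd ik]]; first by exists j.
by exists k => // m /(overlap_dominated dom) /ik.
Qed.

End Domination.

Section MaximalHeadAttribute.
Variables (Att Rel : finType) (attr : Rel -> {set Att}) (head : {set Att}).
Hypothesis no_strand : ~ strand attr head.
Hypothesis hierarchical : headjoin_hierarchical attr head.
Local Notation rels := (headjoin_rels attr head).

Lemma headjoin_rels_nested b c :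
  [\/ rels b \subset rels c, rels c \subset rels b | [disjoint rels b & rels c]].
Proof.
have [sub|[sub|dis]] := hierarchical b c.
- by apply: Or31; apply/subsetP => i /headjoin_relsP/sub/headjoin_relsP.
- by apply: Or32; apply/subsetP => i /headjoin_relsP/sub/headjoin_relsP.
apply: Or33; apply/pred0P => i /=.
by apply/andP => -[/headjoin_relsP ib /headjoin_relsP ic]; apply: (dis i).
Qed.

Lemma overlap_sub_head i j :
  non_dominated attr head i -> non_dominated attr head j ->
  head :&: attr i != head :&: attr j -> attr i :&: attr j \subset head.
Proof.
move=> ndi ndj hij; apply/subsetP => x xij; apply: contraT => xh.
by case: no_strand; exists i, j; split=> //; apply/set0Pn; exists x; rewrite inE xh.
Qed.

Variable a : Att.
Hypothesis a_max : forall b, b \in head -> #|rels b| <= #|rels a|.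

Lemma headjoin_rels_max_disjoint i j :
  i \in rels a -> non_dominated attr head j -> a \notin attr j ->
  ~~ overlap attr i j.
Proof.
move=> /[dup] ia /headjoin_relsP [ndi]; rewrite inE => /andP [ai ah] ndj aj.
apply/negP => /set0Pn [x xij].
have hij : head :&: attr i != head :&: attr j.
  by apply/negP => /eqP/setP/(_ a); rewrite !inE ah ai (negPf aj).
have xh : x \in head := subsetP (overlap_sub_head ndi ndj hij) x xij.
move: xij; rewrite inE => /andP [xi xj].
have jx : j \in rels x by apply/headjoin_relsP; split; rewrite // inE xj.
have ja : j \notin rels a by rewrite inE negb_and inE (negPf aj) orbT.
have [sub|sub|dis] := headjoin_rels_nested a x.
- have /proper_card : rels a \proper rels x.
    by apply/properP; split=> //; exists j.
  by rewrite ltnNge a_max.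
- by rewrite (subsetP sub j jx) in ja.
- have ix : i \in rels x.
    by apply/headjoin_relsP; split; rewrite // inE xi xh.
  by rewrite (disjointFr dis ia) in ix.
Qed.

Hypothesis attr_inj : injective attr.
Hypothesis attr_neq0 : forall i, attr i != set0.

Lemma headjoin_rels_max_neq0 :
  head_in_body attr head -> head != set0 -> rels a != set0.
Proof.
move=> head_sub /set0Pn [b bh].
have /bigcupP [r _ br] := subsetP head_sub b bh.
have rh : attr r :&: head != set0 by apply/set0Pn; exists b; rewrite inE br bh.
have [r' ndr' /set0Pn [c]] := exists_non_dominated_head attr_inj attr_neq0 rh.
rewrite inE => /andP [cr ch].
have r'c : r' \in rels c by apply/headjoin_relsP; split; rewrite // inE cr ch.
rewrite -card_gt0 (leq_trans _ (a_max ch)) // card_gt0.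
by apply/set0Pn; exists r'.
Qed.

Hypothesis connected : connected_query attr.

Lemma max_attribute_in_non_dominated j :
  rels a != set0 -> non_dominated attr head j -> a \in attr j.
Proof.
move=> /set0Pn [i0 i0a] ndj; apply: contraT => aj.
pose near := [pred k | [exists i in rels a, overlap attr k i]].
have overlap_sym : connect_sym (overlap attr).
  by apply: sym_connect_sym => k m; apply: overlapC.
have near_closed : closed (overlap attr) near.
  apply: (intro_closed overlap_sym) => k m km /exists_inP [i ia ki].
  have [k' ndk' absorb] := exists_non_dominated_absorbing head attr_inj attr_neq0 k.
  apply/exists_inP; exists k'; last by apply: absorb; rewrite overlapC.
  have ik' : overlap attr i k' by apply: absorb; rewrite overlapC.
  apply/headjoin_relsP; split=> //; rewrite inE.
  have /headjoin_relsP [_] := ia; rewrite inE => /andP [_ ->].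
  by rewrite andbT; apply: contraLR ik' => /(headjoin_rels_max_disjoint ia ndk').
have i0_near : i0 \in near by apply/exists_inP; exists i0 => //; apply: overlap_refl.
have j_near : j \in near.
  have i0j : connect (overlap attr) i0 j.
    by rewrite -(eq_connect (share_in_attrQ attr)); apply: connected.
  by rewrite -(closed_connect near_closed i0j).
case/exists_inP: j_near => i ia ji.
by move: (headjoin_rels_max_disjoint ia ndj aj); rewrite overlapC ji.
Qed.

End MaximalHeadAttribute.

Theorem lemma16 (Att Rel : finType) (attr : Rel -> {set Att}) (head : {set Att}) :
  head_in_body attr head ->
  distinct_attr_sets attr ->
  connected_query attr ->
  ~ is_boolean head ->
  (forall a : Att, ~ universal attr head a) ->
  (forall i : Rel, ~ vacuum attr i) ->
  has_hard_structure attr head.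
Proof.
move=> head_sub attr_inj connected nonboolean no_universal nonvacuum.
have attr_neq0 i : attr i != set0 by apply/eqP/nonvacuum.
have head_neq0 : head != set0 by apply/eqP.
have [s|no_strand] := classic (strand attr head); first by right; left.
have [hierarchical|] := classic (headjoin_hierarchical attr head); last by right; right.
have /set0Pn [b0 b0h] := head_neq0.
pose a := [arg max_(b > b0 in head) #|headjoin_rels attr head b|].
have [ah a_max] : a \in head /\ forall b, b \in head ->
    #|headjoin_rels attr head b| <= #|headjoin_rels attr head a|.
  by rewrite /a; case: arg_maxnP.
have rels_a_neq0 := headjoin_rels_max_neq0 a_max attr_inj attr_neq0 head_sub head_neq0.
case: (no_universal a); split=> // r.
have [j ndj jr] := exists_non_dominated_sub head attr_inj r.
apply: (subsetP jr).
exact: (max_attribute_in_non_dominated no_strand hierarchical a_max attr_inj attr_neq0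
  connected rels_a_neq0 ndj).
Qed.
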